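(* (i) Every $\mathcal H$-convex function $f:\mathbb R\to\mathbb R_{+\infty}$ is even and lower semicontinuous. (ii) If $C\subset\mathcal H$ is $\mathcal H$-convex and $A\subset\mathbb R^2$ satisfies $C=\{\psi_{a,b}:(a,b)\in A\}$, then $A$ is closed and convex and $A-\mathbb R^2_+\subset A$. (iii) If $A\subset\mathbb R^2$ is closed and convex, $A-\mathbb R^2_+\subset A$, and the function $\sup_{(a,b)\in A}\psi_{a,b}$ is not identically $+\infty$ on $\mathbb R$, then $C=\{\psi_{a,b}:(a,b)\in A\}$ is $\mathcal H$-convex.
   Context: $X=\mathbb R$; $\mathbb R_{+\infty}=\mathbb R\cup\{+\infty\}$. For $a,b\in\mathbb R$, $\phi_a(x)=ax^2$, $\psi_{a,b}(x)=ax^2+b$; $\mathcal L=\{\phi_a:a\in\mathbb R\}$, $\mathcal H=\{\psi_{a,b}:a,b\in\mathbb R\}$. A function $f$ is $\mathcal H$-convex if $f=\sup_{h\in H}h$ pointwise for some $H\subset\mathcal H$. A subset $C\subset\mathcal H$ is $\mathcal H$-convex if for every $h_0\in\mathcal H\setminus C$ there is $x\in\mathbb R$ with $h_0(x)>\sup_{h\in C}h(x)$. $\mathbb R^2_+=\{(a,b):a\ge0,b\ge0\}$ and $A-B=\{u-v:u\in A,v\in B\}$. *)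

From Stdlib Require Export Reals.
Open Scope R_scope.

Inductive ERp : Type := Fin : R -> ERp | PInf : ERp.

Definition ltRE (y : R) (v : ERp) : Prop :=
  match v with Fin r => y < r | PInf => True end.

(* v is the supremum (in R ∪ {±∞}) of the real set S, and v ∈ R ∪ {+∞} *)
Definition is_sup_ext (S : R -> Prop) (v : ERp) : Prop :=
  match v with
  | Fin r => is_lub S r
  | PInf => forall M : R, exists y, S y /\ M < y
  end.

Definition phi (a : R) : R -> R := fun x => a * x ^ 2.
Definition psi (a b : R) : R -> R := fun x => a * x ^ 2 + b.

Definition inH (h : R -> R) : Prop := exists a b, h = psi a b.

Definition H_convex_fun (f : R -> ERp) : Prop :=
  exists H : (R -> R) -> Prop,
    (forall h, H h -> inH h) /\
    forall x, is_sup_ext (fun y => exists h, H h /\ y = h x) (f x).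

(* C ⊂ ℋ is ℋ-convex: every h0 ∈ ℋ \ C exceeds sup_{h∈C} h at some point
   (h0 x > sup S  iff  some real upper bound u of S satisfies u < h0 x;
    this covers sup S = -∞ and excludes sup S = +∞) *)
Definition H_convex_set (C : (R -> R) -> Prop) : Prop :=
  forall h0, inH h0 -> ~ C h0 ->
    exists x u, (forall h, C h -> h x <= u) /\ u < h0 x.

Definition even_fun (f : R -> ERp) : Prop := forall x, f (- x) = f x.

Definition lsc (f : R -> ERp) : Prop :=
  forall x y, ltRE y (f x) ->
    exists delta, delta > 0 /\ forall z, Rabs (z - x) < delta -> ltRE y (f z).

Definition closed2 (A : R * R -> Prop) : Prop :=
  forall p, ~ A p -> exists eps, eps > 0 /\
    forall q, (fst q - fst p) ^ 2 + (snd q - snd p) ^ 2 < eps ^ 2 -> ~ A q.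

Definition convex2 (A : R * R -> Prop) : Prop :=
  forall p q t, A p -> A q -> 0 <= t <= 1 ->
    A (t * fst p + (1 - t) * fst q, t * snd p + (1 - t) * snd q).

Definition down_closed (A : R * R -> Prop) : Prop :=
  forall a b u v, A (a, b) -> 0 <= u -> 0 <= v -> A (a - u, b - v).

Definition param_by (C : (R -> R) -> Prop) (A : R * R -> Prop) : Prop :=
  forall h, C h <-> exists a b, A (a, b) /\ h = psi a b.

From Stdlib Require Import Reals Lra Lia Classical IndefiniteDescription.
Open Scope R_scope.

(* (i) Every [psi a b] is even and continuous, and a pointwise supremum of even
   continuous functions is even and lower semicontinuous.
   (ii) [psi a b x = x^2 a + b] is linear in [(a, b)] with nonnegative weights
   [(x^2, 1)], so H-convexity of [C] says that every point outside [A] is cut off by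
   a closed half-plane [w . q <= c] with [w >= 0] containing [A]; an intersection of
   such half-planes is closed, convex and stable under subtracting [R^2_+].
   (iii) Conversely, the nearest point of the closed convex set [A] to an outside
   point [p] yields a separating half-plane; stability under subtracting [R^2_+]
   forces [w >= 0]. For [w2 > 0] the half-plane is that of [psi] at
   [x = sqrt (w1 / w2)]; for [w2 = 0] it is a limit of those half-planes as
   [x^2 -> oo], and the point where the supremum is finite makes the limit work. *)

Lemma is_sup_ext_unique (S : R -> Prop) (v v' : ERp) :
  is_sup_ext S v -> is_sup_ext S v' -> v = v'.
Proof.
  destruct v as [r|], v' as [r'|]; simpl; intros Hv Hv'; auto.
  - f_equal. destruct Hv as [Ub Lub], Hv' as [Ub' Lub'].
    apply Rle_antisym; [apply Lub | apply Lub']; assumption.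
  - destruct Hv as [Ub _]. destruct (Hv' r) as [y [Sy Hy]].
    specialize (Ub y Sy). lra.
  - destruct Hv' as [Ub _]. destruct (Hv r') as [y [Sy Hy]].
    specialize (Ub y Sy). lra.
Qed.

Lemma is_sup_ext_same_set (S S' : R -> Prop) (v : ERp) :
  (forall y, S y <-> S' y) -> is_sup_ext S v -> is_sup_ext S' v.
Proof.
  intros E. destruct v as [r|]; simpl.
  - intros [Ub Lub]. split.
    + intros y Hy. apply Ub, E, Hy.
    + intros b Hb. apply Lub. intros y Hy. apply Hb, E, Hy.
  - intros Hv M. destruct (Hv M) as [y [Sy Hy]]. exists y. split; auto. apply E, Sy.
Qed.

Lemma is_sup_ext_lt_elem (S : R -> Prop) (v : ERp) (y : R) :
  is_sup_ext S v -> ltRE y v -> exists s, S s /\ y < s.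
Proof.
  destruct v as [r|]; simpl; intros Hv Hy.
  - destruct Hv as [_ Lub]. apply NNPP. intros Hno.
    assert (r <= y); [|lra]. apply Lub. intros s Ss.
    apply Rnot_lt_le. intros Hys. apply Hno. exists s. auto.
  - apply Hv.
Qed.

Lemma is_sup_ext_elem_lt (S : R -> Prop) (v : ERp) (y s : R) :
  is_sup_ext S v -> S s -> y < s -> ltRE y v.
Proof.
  destruct v as [r|]; simpl; intros Hv Ss Hys; auto.
  destruct Hv as [Ub _]. specialize (Ub s Ss). lra.
Qed.

Definition pointwise_sup (H : (R -> R) -> Prop) (f : R -> ERp) : Prop :=
  forall x, is_sup_ext (fun y => exists h, H h /\ y = h x) (f x).

Lemma pointwise_sup_even (H : (R -> R) -> Prop) (f : R -> ERp) :
  (forall h, H h -> forall x, h (- x) = h x) -> pointwise_sup H f -> even_fun f.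
Proof.
  intros Heven Hf x. apply (is_sup_ext_unique (fun y => exists h, H h /\ y = h x)); [|apply Hf].
  apply (is_sup_ext_same_set (fun y => exists h, H h /\ y = h (- x))); [|apply Hf].
  intros y. split; intros [h [Hh ->]]; exists h; rewrite (Heven h Hh); auto.
Qed.

Lemma pointwise_sup_lsc (H : (R -> R) -> Prop) (f : R -> ERp) :
  (forall h, H h -> continuity h) -> pointwise_sup H f -> lsc f.
Proof.
  intros Hcont Hf x y Hy.
  destruct (is_sup_ext_lt_elem _ _ _ (Hf x) Hy) as [s [[h [Hh ->]] Hyh]].
  destruct (Hcont h Hh x (h x - y)) as [d [Hd Hnear]]; [lra|].
  exists d. split; [exact Hd|]. intros z Hz.
  apply (is_sup_ext_elem_lt _ _ y (h z) (Hf z)); [exists h; auto|].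
  destruct (Req_dec z x) as [->|Hzx]; [exact Hyh|].
  assert (Hclose : Rdist (h z) (h x) < h x - y).
  { apply Hnear. split; [split; [exact I | congruence] | exact Hz]. }
  apply Rabs_def2 in Hclose. lra.
Qed.

Lemma psi_even (a b x : R) : psi a b (- x) = psi a b x.
Proof. unfold psi. ring. Qed.

Lemma psi_continuous (a b : R) : continuity (psi a b).
Proof. unfold psi. reg. Qed.

Lemma psi_inj (a b a' b' : R) : psi a b = psi a' b' -> a = a' /\ b = b'.
Proof.
  intros E.
  assert (E0 : psi a b 0 = psi a' b' 0) by (rewrite E; reflexivity).
  assert (E1 : psi a b 1 = psi a' b' 1) by (rewrite E; reflexivity).
  unfold psi in E0, E1. split; lra.
Qed.

Lemma H_convex_fun_even_lsc (f : R -> ERp) : H_convex_fun f -> even_fun f /\ lsc f.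
Proof.
  intros [H [HH Hf]]. split.
  - apply (pointwise_sup_even H); [|exact Hf].
    intros h Hh. destruct (HH h Hh) as [a [b ->]]. apply psi_even.
  - apply (pointwise_sup_lsc H); [|exact Hf].
    intros h Hh. destruct (HH h Hh) as [a [b ->]]. apply psi_continuous.
Qed.

Lemma Rabs_lt_of_sum_sq (x y e : R) : 0 < e -> x ^ 2 + y ^ 2 < e ^ 2 -> Rabs x < e.
Proof.
  intros He Hs. rewrite <- (pow2_abs x) in Hs.
  pose proof (pow2_ge_0 y). pose proof (Rabs_pos x). nra.
Qed.

Definition halfplane_separates (A : R * R -> Prop) (w1 w2 c : R) (p : R * R) : Prop :=
  (forall a b, A (a, b) -> w1 * a + w2 * b <= c) /\ c < w1 * fst p + w2 * snd p.

Lemma closed2_of_halfplane_separated (A : R * R -> Prop) :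
  (forall p, ~ A p -> exists w1 w2 c, halfplane_separates A w1 w2 c p) -> closed2 A.
Proof.
  intros Hsep [p1 p2] Hp. destruct (Hsep _ Hp) as [w1 [w2 [c [HA Hc]]]]; simpl in Hc.
  set (d := w1 * p1 + w2 * p2 - c).
  set (W := Rabs w1 + Rabs w2).
  pose proof (Rabs_pos w1). pose proof (Rabs_pos w2).
  exists (d / (W + 1)).
  assert (Heps : 0 < d / (W + 1)) by (apply Rdiv_lt_0_compat; unfold d, W; lra).
  split; [exact Heps|]. intros [q1 q2] Hq HAq; simpl in Hq.
  set (e := d / (W + 1)) in *.
  assert (He : e * (W + 1) = d) by (unfold e; field; unfold W; lra).
  assert (Hq1 : Rabs (q1 - p1) < e) by (apply (Rabs_lt_of_sum_sq _ (q2 - p2)); auto).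
  assert (Hq2 : Rabs (q2 - p2) < e) by (apply (Rabs_lt_of_sum_sq _ (q1 - p1)); [|lra]; auto).
  assert (Hdev : Rabs (w1 * (q1 - p1) + w2 * (q2 - p2)) < d).
  { eapply Rle_lt_trans; [apply Rabs_triang|]. rewrite !Rabs_mult.
    assert (Rabs w1 * Rabs (q1 - p1) <= Rabs w1 * e) by (apply Rmult_le_compat_l; lra).
    assert (Rabs w2 * Rabs (q2 - p2) <= Rabs w2 * e) by (apply Rmult_le_compat_l; lra).
    unfold W in He. nra. }
  apply Rabs_def2 in Hdev. specialize (HA q1 q2 HAq). unfold d in Hdev. lra.
Qed.

Lemma convex2_of_halfplane_separated (A : R * R -> Prop) :
  (forall p, ~ A p -> exists w1 w2 c, halfplane_separates A w1 w2 c p) -> convex2 A.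
Proof.
  intros Hsep [p1 p2] [q1 q2] t Hp Hq Ht. simpl. apply NNPP. intros Hn.
  destruct (Hsep _ Hn) as [w1 [w2 [c [HA Hc]]]]; simpl in Hc.
  specialize (HA _ _ Hp) as Hcp. specialize (HA _ _ Hq) as Hcq.
  assert (E : w1 * (t * p1 + (1 - t) * q1) + w2 * (t * p2 + (1 - t) * q2)
              = t * (w1 * p1 + w2 * p2) + (1 - t) * (w1 * q1 + w2 * q2)) by ring.
  nra.
Qed.

Lemma down_closed_of_halfplane_separated (A : R * R -> Prop) :
  (forall p, ~ A p -> exists w1 w2 c, 0 <= w1 /\ 0 <= w2 /\ halfplane_separates A w1 w2 c p) ->
  down_closed A.
Proof.
  intros Hsep a b u v Hab Hu Hv. apply NNPP. intros Hn.
  destruct (Hsep _ Hn) as [w1 [w2 [c [Hw1 [Hw2 [HA Hc]]]]]]; simpl in Hc.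
  specialize (HA _ _ Hab). nra.
Qed.

Definition psi_separates (A : R * R -> Prop) (x u : R) (p : R * R) : Prop :=
  (forall a b, A (a, b) -> psi a b x <= u) /\ u < psi (fst p) (snd p) x.

Lemma psi_separates_halfplane (A : R * R -> Prop) (x u : R) (p : R * R) :
  psi_separates A x u p <-> halfplane_separates A (x ^ 2) 1 u p.
Proof.
  unfold psi_separates, halfplane_separates, psi.
  split; intros [HA Hp]; split; try (intros a b Hab; specialize (HA a b Hab)); lra.
Qed.

Lemma param_by_iff (C : (R -> R) -> Prop) (A : R * R -> Prop) (a b : R) :
  param_by C A -> (C (psi a b) <-> A (a, b)).
Proof.
  intros P. split.
  - intros HC. apply P in HC. destruct HC as [a' [b' [HA E]]].
    destruct (psi_inj _ _ _ _ E) as [-> ->]. exact HA.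
  - intros HA. apply P. exists a, b. auto.
Qed.

Lemma H_convex_set_iff_psi_separated (C : (R -> R) -> Prop) (A : R * R -> Prop) :
  param_by C A ->
  (H_convex_set C <-> forall p, ~ A p -> exists x u, psi_separates A x u p).
Proof.
  intros P. split.
  - intros HC [a0 b0] Hp.
    destruct (HC (psi a0 b0)) as [x [u [Hub Hlt]]].
    + exists a0, b0. reflexivity.
    + rewrite (param_by_iff C A a0 b0 P). exact Hp.
    + exists x, u. split; [|exact Hlt]. intros a b Hab. apply Hub.
      apply (param_by_iff C A a b P). exact Hab.
  - intros Hsep h0 [a0 [b0 ->]] Hn.
    destruct (Hsep (a0, b0)) as [x [u [Hub Hlt]]].
    + rewrite <- (param_by_iff C A a0 b0 P). exact Hn.
    + exists x, u. split; [|exact Hlt]. intros h Hh.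
      apply P in Hh. destruct Hh as [a [b [Hab ->]]]. apply Hub, Hab.
Qed.

Lemma H_convex_param_closed_convex_down (C : (R -> R) -> Prop) (A : R * R -> Prop) :
  H_convex_set C -> param_by C A -> closed2 A /\ convex2 A /\ down_closed A.
Proof.
  intros HC P. rewrite (H_convex_set_iff_psi_separated C A P) in HC.
  assert (Hsep : forall p, ~ A p ->
            exists w1 w2 c, 0 <= w1 /\ 0 <= w2 /\ halfplane_separates A w1 w2 c p).
  { intros p Hp. destruct (HC p Hp) as [x [u Hxu]].
    exists (x ^ 2), 1, u. rewrite <- psi_separates_halfplane.
    pose proof (pow2_ge_0 x). split; [lra | split; [lra | exact Hxu]]. }
  assert (Hsep' : forall p, ~ A p -> exists w1 w2 c, halfplane_separates A w1 w2 c p).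
  { intros p Hp. destruct (Hsep p Hp) as [w1 [w2 [c [_ [_ H]]]]]. eauto. }
  split; [|split].
  - apply closed2_of_halfplane_separated, Hsep'.
  - apply convex2_of_halfplane_separated, Hsep'.
  - apply down_closed_of_halfplane_separated, Hsep.
Qed.

Definition dist2 (p q : R * R) : R := (fst p - fst q) ^ 2 + (snd p - snd q) ^ 2.

Lemma dist2_nonneg (p q : R * R) : 0 <= dist2 p q.
Proof.
  unfold dist2. pose proof (pow2_ge_0 (fst p - fst q)). pose proof (pow2_ge_0 (snd p - snd q)).
  lra.
Qed.

Lemma inf_approx (T : Type) (S : T -> Prop) (g : T -> R) (t0 : T) (L : R) :
  S t0 -> (forall t, S t -> L <= g t) ->
  exists m, (forall t, S t -> m <= g t) /\
            (forall e, 0 < e -> exists t, S t /\ g t < m + e).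
Proof.
  intros St0 HL.
  set (E := fun y => exists t, S t /\ y = - g t).
  assert (HEb : bound E).
  { exists (- L). intros y [t [St ->]]. specialize (HL t St). lra. }
  assert (HEne : exists y, E y) by (exists (- g t0); exists t0; auto).
  destruct (completeness E HEb HEne) as [l [Hub Hlub]].
  exists (- l). split.
  - intros t St. assert (- g t <= l) by (apply Hub; exists t; auto). lra.
  - intros e He. apply NNPP. intros Hno.
    assert (l <= l - e); [|lra].
    apply Hlub. intros y [t [St ->]]. apply Rnot_lt_le. intros Hlt.
    apply Hno. exists t. split; [exact St | lra].
Qed.

Definition convex_comb (t : R) (p q : R * R) : R * R :=
  (t * fst p + (1 - t) * fst q, t * snd p + (1 - t) * snd q).

Lemma parallelogram_dist2 (p q q' : R * R) :
  dist2 q q' = 2 * dist2 q p + 2 * dist2 q' p - 4 * dist2 (convex_comb (1 / 2) q q') p.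
Proof. unfold dist2, convex_comb. simpl. field. Qed.

Lemma near_minimizers_close (A : R * R -> Prop) (p q q' : R * R) (m : R) :
  convex2 A -> (forall r, A r -> m <= dist2 r p) -> A q -> A q' ->
  dist2 q q' <= 2 * (dist2 q p - m) + 2 * (dist2 q' p - m).
Proof.
  intros Hcv Hm Hq Hq'.
  pose proof (Hm _ (Hcv q q' (1 / 2) Hq Hq' ltac:(lra))) as Hmid.
  fold (convex_comb (1 / 2) q q') in Hmid.
  rewrite (parallelogram_dist2 p). lra.
Qed.

Lemma inv_succ_INR_cv : Un_cv (fun n => / (INR n + 1)) 0.
Proof.
  apply cv_infty_cv_0. intros M. destruct (INR_unbounded M) as [N HN].
  exists N. intros n Hn. assert (INR N <= INR n) by (apply le_INR; lia). lra.
Qed.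

Lemma Cauchy_crit_components (u : nat -> R * R) :
  (forall eps, 0 < eps -> exists N, forall n k, (n >= N)%nat -> (k >= N)%nat ->
     dist2 (u n) (u k) < eps) ->
  Cauchy_crit (fun n => fst (u n)) /\ Cauchy_crit (fun n => snd (u n)).
Proof.
  intros Hc. split; intros eps He;
    destruct (Hc (eps ^ 2)) as [N HN]; try nra; exists N; intros n k Hn Hk;
    specialize (HN n k Hn Hk); unfold dist2, Rdist in *.
  - apply (Rabs_lt_of_sum_sq _ (snd (u n) - snd (u k))); auto.
  - apply (Rabs_lt_of_sum_sq _ (fst (u n) - fst (u k))); [auto | lra].
Qed.

Lemma closed2_seq_limit (A : R * R -> Prop) (u : nat -> R * R) (l : R * R) :
  closed2 A -> (forall n, A (u n)) ->
  Un_cv (fun n => fst (u n)) (fst l) -> Un_cv (fun n => snd (u n)) (snd l) -> A l.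
Proof.
  intros Hcl HA H1 H2. apply NNPP. intros Hl.
  destruct (Hcl l Hl) as [eps [He Hball]].
  destruct (H1 (eps / 2)) as [N1 HN1]; [lra|].
  destruct (H2 (eps / 2)) as [N2 HN2]; [lra|].
  set (n := Nat.max N1 N2).
  specialize (HN1 n ltac:(lia)). specialize (HN2 n ltac:(lia)). unfold Rdist in *.
  apply (Hball (u n)); [|apply HA].
  rewrite <- (pow2_abs (fst (u n) - fst l)), <- (pow2_abs (snd (u n) - snd l)).
  pose proof (Rabs_pos (fst (u n) - fst l)). pose proof (Rabs_pos (snd (u n) - snd l)).
  nra.
Qed.

Lemma Un_cv_const (c : R) : Un_cv (fun _ => c) c.
Proof. intros eps He. exists 0%nat. intros. unfold Rdist. rewrite Rminus_diag, Rabs_R0. lra. Qed.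

Lemma Un_cv_dist2 (u : nat -> R * R) (l p : R * R) :
  Un_cv (fun n => fst (u n)) (fst l) -> Un_cv (fun n => snd (u n)) (snd l) ->
  Un_cv (fun n => dist2 (u n) p) (dist2 l p).
Proof.
  intros H1 H2.
  apply (Un_cv_ext (fun n => (fst (u n) - fst p) * (fst (u n) - fst p)
                             + (snd (u n) - snd p) * (snd (u n) - snd p))).
  { intros n. unfold dist2. ring. }
  replace (dist2 l p) with ((fst l - fst p) * (fst l - fst p) + (snd l - snd p) * (snd l - snd p))
    by (unfold dist2; ring).
  apply CV_plus; apply CV_mult; apply CV_minus; auto using Un_cv_const.
Qed.

Lemma closest_point_exists (A : R * R -> Prop) (p q0 : R * R) :
  closed2 A -> convex2 A -> A q0 ->
  exists s, A s /\ forall q, A q -> dist2 s p <= dist2 q p.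
Proof.
  intros Hcl Hcv Hq0.
  destruct (inf_approx _ A (fun q => dist2 q p) q0 0 Hq0 (fun q _ => dist2_nonneg q p))
    as [m [Hm Happrox]].
  destruct (functional_choice (fun n q => A q /\ dist2 q p < m + / (INR n + 1)))
    as [u Hu].
  { intros n. apply Happrox. apply Rinv_0_lt_compat. pose proof (pos_INR n). lra. }
  assert (Hcauchy : forall eps, 0 < eps -> exists N, forall n k, (n >= N)%nat -> (k >= N)%nat ->
            dist2 (u n) (u k) < eps).
  { intros eps He. destruct (inv_succ_INR_cv (eps / 4)) as [N HN]; [lra|].
    exists N. intros n k Hn Hk.
    specialize (HN n Hn) as HNn. specialize (HN k Hk) as HNk. unfold Rdist in HNn, HNk.
    rewrite Rminus_0_r in HNn, HNk. apply Rabs_def2 in HNn, HNk.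
    destruct (Hu n) as [An Dn], (Hu k) as [Ak Dk].
    pose proof (near_minimizers_close A p _ _ m Hcv Hm An Ak). lra. }
  destruct (Cauchy_crit_components u Hcauchy) as [C1 C2].
  destruct (R_complete _ C1) as [l1 Hl1], (R_complete _ C2) as [l2 Hl2].
  exists (l1, l2). split.
  - apply (closed2_seq_limit A u); auto. intros n. apply Hu.
  - assert (Hle : dist2 (l1, l2) p <= m).
    { apply (@Rle_cv_lim (fun n => dist2 (u n) p) (fun n => m + / (INR n + 1))).
      - intros n. left. apply Hu.
      - apply Un_cv_dist2; auto.
      - rewrite <- (Rplus_0_r m) at 1. apply CV_plus; [apply Un_cv_const | apply inv_succ_INR_cv]. }
    intros q Hq. specialize (Hm q Hq). lra.
Qed.

Lemma nonneg_of_small_perturbation (D E : R) :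
  (forall t, 0 < t <= 1 -> 0 <= D + t * E) -> 0 <= D.
Proof.
  intros Ht. apply Rnot_lt_le. intros HD.
  set (t := Rmin 1 (- D / (Rabs E + 1))).
  pose proof (Rabs_pos E) as HE. pose proof (Rle_abs E).
  assert (Ht0 : 0 < t) by (apply Rmin_glb_lt; [lra | apply Rdiv_lt_0_compat; lra]).
  assert (Ht1 : t <= 1) by apply Rmin_l.
  assert (HtE : t * (Rabs E + 1) <= - D).
  { assert (Hr : t <= - D / (Rabs E + 1)) by apply Rmin_r.
    apply (Rmult_le_compat_r (Rabs E + 1)) in Hr; [|lra].
    unfold Rdiv in Hr. rewrite Rmult_assoc, Rinv_l in Hr; lra. }
  specialize (Ht t (conj Ht0 Ht1)). nra.
Qed.

Lemma dist2_pos (p q : R * R) : p <> q -> 0 < dist2 p q.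
Proof.
  destruct p as [p1 p2], q as [q1 q2]. unfold dist2. simpl. intros Hne.
  pose proof (pow2_ge_0 (p1 - q1)). pose proof (pow2_ge_0 (p2 - q2)).
  destruct (Req_dec p1 q1) as [->|H1]; [destruct (Req_dec p2 q2) as [->|H2]|].
  - congruence.
  - assert (0 < (p2 - q2) ^ 2) by nra. lra.
  - assert (0 < (p1 - q1) ^ 2) by nra. lra.
Qed.

Lemma closest_point_separates (A : R * R -> Prop) (p s : R * R) :
  convex2 A -> A s -> ~ A p -> (forall q, A q -> dist2 s p <= dist2 q p) ->
  halfplane_separates A (fst p - fst s) (snd p - snd s)
    ((fst p - fst s) * fst s + (snd p - snd s) * snd s) p.
Proof.
  intros Hcv Hs Hp Hmin. split.
  - intros a b Hab.
    set (D := (a - fst s) * (fst s - fst p) + (b - snd s) * (snd s - snd p)).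
    set (E := (a - fst s) ^ 2 + (b - snd s) ^ 2).
    assert (HD : 0 <= 2 * D).
    { apply (nonneg_of_small_perturbation _ E). intros t Ht.
      pose proof (Hmin _ (Hcv (a, b) s t Hab Hs ltac:(lra))) as Hcomb.
      fold (convex_comb t (a, b) s) in Hcomb.
      assert (Hexpand : dist2 (convex_comb t (a, b) s) p = dist2 s p + t * (2 * D + t * E))
        by (unfold dist2, convex_comb, D, E; simpl; ring).
      rewrite Hexpand in Hcomb. nra. }
    unfold D in HD. nra.
  - assert (Hps : p <> s) by (intros ->; contradiction).
    pose proof (dist2_pos p s Hps) as Hpos. unfold dist2 in Hpos. nra.
Qed.

Lemma separation_closed_convex (A : R * R -> Prop) (p q0 : R * R) :
  closed2 A -> convex2 A -> A q0 -> ~ A p ->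
  exists w1 w2 c, halfplane_separates A w1 w2 c p.
Proof.
  intros Hcl Hcv Hq0 Hp.
  destruct (closest_point_exists A p q0 Hcl Hcv Hq0) as [s [Hs Hmin]].
  eexists _, _, _. exact (closest_point_separates A p s Hcv Hs Hp Hmin).
Qed.

Lemma nonneg_of_bounded_ray (w K : R) : (forall u, 0 <= u -> - w * u <= K) -> 0 <= w.
Proof.
  intros Hb. apply Rnot_lt_le. intros Hw.
  pose proof (Rle_abs K). pose proof (Rabs_pos K).
  assert (Hu : 0 <= (Rabs K + 1) / - w) by (apply Rlt_le, Rdiv_lt_0_compat; lra).
  specialize (Hb _ Hu).
  replace (- w * ((Rabs K + 1) / - w)) with (Rabs K + 1) in Hb by (field; lra).
  lra.
Qed.

Lemma halfplane_weights_nonneg (A : R * R -> Prop) (w1 w2 c : R) (q0 : R * R) :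
  down_closed A -> A q0 -> (forall a b, A (a, b) -> w1 * a + w2 * b <= c) ->
  0 <= w1 /\ 0 <= w2.
Proof.
  intros Hdc Hq0 HA. destruct q0 as [qa qb]. split.
  - apply (nonneg_of_bounded_ray w1 (c - w1 * qa - w2 * qb)). intros u Hu.
    specialize (HA _ _ (Hdc qa qb u 0 Hq0 Hu (Rle_refl 0))). lra.
  - apply (nonneg_of_bounded_ray w2 (c - w1 * qa - w2 * qb)). intros u Hu.
    specialize (HA _ _ (Hdc qa qb 0 u Hq0 (Rle_refl 0) Hu)). lra.
Qed.

Lemma halfplane_separates_scale (A : R * R -> Prop) (w1 w2 c k : R) (p : R * R) :
  0 < k -> halfplane_separates A w1 w2 c p ->
  halfplane_separates A (w1 / k) (w2 / k) (c / k) p.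
Proof.
  intros Hk [HA Hc]. pose proof (Rinv_0_lt_compat k Hk). unfold Rdiv. split.
  - intros a b Hab. specialize (HA a b Hab). nra.
  - nra.
Qed.

Lemma psi_separates_of_halfplane (A : R * R -> Prop) (w c : R) (p : R * R) :
  0 <= w -> halfplane_separates A w 1 c p -> psi_separates A (sqrt w) c p.
Proof. intros Hw Hsep. apply psi_separates_halfplane. rewrite pow2_sqrt; assumption. Qed.

Lemma psi_separates_of_vertical (A : R * R -> Prop) (c x1 M : R) (p : R * R) :
  halfplane_separates A 1 0 c p -> (forall a b, A (a, b) -> psi a b x1 <= M) ->
  exists x u, psi_separates A x u p.
Proof.
  destruct p as [a0 b0]. intros [HA Hc] HM. simpl in Hc.
  set (K := Rmax 0 ((M - psi a0 b0 x1) / (a0 - c)) + 1).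
  pose proof (Rmax_l 0 ((M - psi a0 b0 x1) / (a0 - c))) as HK0.
  assert (HK : M - psi a0 b0 x1 < K * (a0 - c)).
  { pose proof (Rmax_r 0 ((M - psi a0 b0 x1) / (a0 - c))) as Hr.
    apply (Rmult_le_compat_r (a0 - c)) in Hr; [|lra].
    unfold Rdiv in Hr. rewrite Rmult_assoc, Rinv_l in Hr; [|lra].
    unfold K. lra. }
  pose proof (pow2_ge_0 x1).
  assert (Hshift : forall a b, psi a b (sqrt (x1 ^ 2 + K)) = psi a b x1 + K * a).
  { intros a b. unfold psi. rewrite pow2_sqrt; [ring | unfold K; lra]. }
  exists (sqrt (x1 ^ 2 + K)), (M + K * c). split; simpl.
  - intros a b Hab. rewrite Hshift. specialize (HM a b Hab). specialize (HA a b Hab).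
    assert (K * a <= K * c) by (apply Rmult_le_compat_l; unfold K; lra). lra.
  - rewrite Hshift. lra.
Qed.

Lemma psi_separated_of_closed_convex_down (A : R * R -> Prop) :
  closed2 A -> convex2 A -> down_closed A ->
  (exists x M, forall a b, A (a, b) -> psi a b x <= M) ->
  forall p, ~ A p -> exists x u, psi_separates A x u p.
Proof.
  intros Hcl Hcv Hdc [x1 [M HM]] p Hp.
  destruct (classic (exists q, A q)) as [[q0 Hq0] | Hempty].
  2:{ exists 0, (psi (fst p) (snd p) 0 - 1). split; [|lra].
      intros a b Hab. exfalso. eauto. }
  destruct (separation_closed_convex A p q0 Hcl Hcv Hq0 Hp) as [w1 [w2 [c Hsep]]].
  destruct (halfplane_weights_nonneg A w1 w2 c q0 Hdc Hq0 (proj1 Hsep)) as [Hw1 Hw2].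
  destruct (Rle_lt_or_eq_dec 0 w2 Hw2) as [Hw2pos | <-].
  - apply (halfplane_separates_scale _ _ _ _ w2 _ Hw2pos) in Hsep.
    replace (w2 / w2) with 1 in Hsep by (field; lra).
    exists (sqrt (w1 / w2)), (c / w2). apply psi_separates_of_halfplane; [|exact Hsep].
    apply Rmult_le_pos; [lra | apply Rlt_le, Rinv_0_lt_compat, Hw2pos].
  - assert (Hw1pos : 0 < w1).
    { destruct Hsep as [HA Hc]. destruct q0 as [qa qb]. specialize (HA qa qb Hq0).
      destruct Hw1 as [| <-]; [assumption | lra]. }
    apply (halfplane_separates_scale _ _ _ _ w1 _ Hw1pos) in Hsep.
    replace (w1 / w1) with 1 in Hsep by (field; lra).
    replace (0 / w1) with 0 in Hsep by (field; lra).
    exact (psi_separates_of_vertical A _ x1 M p Hsep HM).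
Qed.

Theorem mainTheorem13 :
  (forall f : R -> ERp, H_convex_fun f -> even_fun f /\ lsc f) /\
  (forall (C : (R -> R) -> Prop) (A : R * R -> Prop),
      (forall h, C h -> inH h) -> H_convex_set C -> param_by C A ->
      closed2 A /\ convex2 A /\ down_closed A) /\
  (forall (A : R * R -> Prop) (C : (R -> R) -> Prop),
      closed2 A -> convex2 A -> down_closed A ->
      (exists x M, forall a b, A (a, b) -> psi a b x <= M) ->
      param_by C A ->
      H_convex_set C).
Proof.
  split; [exact H_convex_fun_even_lsc | split].
  (* [C] is contained in H already because of [param_by C A]. *)
  - intros C A _ HC P. exact (H_convex_param_closed_convex_down C A HC P).
  - intros A C Hcl Hcv Hdc Hbounded P.
    apply (H_convex_set_iff_psi_separated C A P).
    exact (psi_separated_of_closed_convex_down A Hcl Hcv Hdc Hbounded).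
Qed.
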